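(* Let $f$ be a monotone and subadditive set function on the subsets of $\mathcal{I}$ with nonnegative real values. Then $p(\mathbf{Q},E)=f(\overline{\mathcal{S}}_{\mathbf{Q}}(E))$ (for $\mathbf{Q}\in B(\mathcal{L})$, $E\in\{\mathbf{Q}(D):D\in\mathcal{I}\}$) is an answer-dependent pricing function that is arbitrage-free.
   Context: $\mathcal{I}$ is a countable nonempty set of database instances; queries are deterministic functions on $\mathcal{I}$; a query bundle is a finite tuple of queries from a language $\mathcal{L}$, evaluated componentwise; $B(\mathcal{L})$ is the set of bundles, closed under concatenation $\mathbf{Q}_1,\mathbf{Q}_2$. $f$ monotone: $A\subseteq B\Rightarrow f(A)\le f(B)$; subadditive: $f(A\cup B)\le f(A)+f(B)$. Conflict set: $\overline{\mathcal{S}}_{\mathbf{Q}}(E)=\{D'\in\mathcal{I}:\mathbf{Q}(D')\ne E\}$. $D\vdash\mathbf{Q}_2\twoheadrightarrow\mathbf{Q}_1$ means every $D'\in\mathcal{I}$ with $\mathbf{Q}_2(D')=\mathbf{Q}_2(D)$ satisfies $\mathbf{Q}_1(D')=\mathbf{Q}_1(D)$. An answer-dependent pricing function $p$ is arbitrage-free if (i) (no information arbitrage) for all $D\in\mathcal{I}$ and $\mathbf{Q}_1,\mathbf{Q}_2\in B(\mathcal{L})$, $D\vdash\mathbf{Q}_2\twoheadrightarrow\mathbf{Q}_1$ implies $p(\mathbf{Q}_2,\mathbf{Q}_2(D))\ge p(\mathbf{Q}_1,\mathbf{Q}_1(D))$, and (ii) (no bundle arbitrage) for all $D$ and $\mathbf{Q}_1,\mathbf{Q}_2$,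 $p(\mathbf{Q},\mathbf{Q}(D))\le p(\mathbf{Q}_1,\mathbf{Q}_1(D))+p(\mathbf{Q}_2,\mathbf{Q}_2(D))$ where $\mathbf{Q}=\mathbf{Q}_1,\mathbf{Q}_2$. *)

From Stdlib Require Import Reals List.
Import ListNotations.
Open Scope R_scope.

Set Implicit Arguments.

Section QueryPricing.
Variables (I Out : Type).

Definition query := I -> Out.

Definition bundle := list query.

Definition in_B (L : query -> Prop) (Q : bundle) : Prop := Forall L Q.

Definition eval (Q : bundle) (D : I) : list Out := map (fun q => q D) Q.

Definition conflict_set (Q : bundle) (E : list Out) : I -> Prop :=
  fun D' => eval Q D' <> E.

Definition determines (D : I) (Q2 Q1 : bundle) : Prop :=
  forall D', eval Q2 D' = eval Q2 D -> eval Q1 D' = eval Q1 D.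

Definition monotone (f : (I -> Prop) -> R) : Prop :=
  forall A B : I -> Prop, (forall x, A x -> B x) -> f A <= f B.

Definition subadditive (f : (I -> Prop) -> R) : Prop :=
  forall A B : I -> Prop, f (fun x => A x \/ B x) <= f A + f B.

Definition nonneg_setfun (f : (I -> Prop) -> R) : Prop :=
  forall A : I -> Prop, 0 <= f A.

Definition answer_dependent_pricing (L : query -> Prop)
  (p : bundle -> list Out -> R) : Prop :=
  forall (Q : bundle) (D : I), in_B L Q -> 0 <= p Q (eval Q D).

Definition no_information_arbitrage (L : query -> Prop)
  (p : bundle -> list Out -> R) : Prop :=
  forall (D : I) (Q1 Q2 : bundle), in_B L Q1 -> in_B L Q2 ->
    determines D Q2 Q1 -> p Q2 (eval Q2 D) >= p Q1 (eval Q1 D).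

Definition no_bundle_arbitrage (L : query -> Prop)
  (p : bundle -> list Out -> R) : Prop :=
  forall (D : I) (Q1 Q2 : bundle), in_B L Q1 -> in_B L Q2 ->
    p (Q1 ++ Q2) (eval (Q1 ++ Q2) D) <= p Q1 (eval Q1 D) + p Q2 (eval Q2 D).

Definition arbitrage_free (L : query -> Prop) (p : bundle -> list Out -> R) : Prop :=
  no_information_arbitrage L p /\ no_bundle_arbitrage L p.

End QueryPricing.

From Stdlib Require Import Reals List Classical.
Open Scope R_scope.

(* Pricing by conflict sets is arbitrage-free because the conflict set is
   antitone in information and subadditive over bundling: if Q2 determines Q1
   at D, every instance conflicting with Q1(D) already conflicts with Q2(D);
   and an instance conflicting with the answer to Q1,Q2 must conflict with
   the answer to Q1 or to Q2.  Monotonicity and subadditivity of f transport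
   these two set-level facts to prices. *)

Section ConflictSets.
Variables (I Out : Type).
Lemma eval_cat (Q1 Q2 : bundle I Out) (D : I) : eval (Q1 ++ Q2) D = eval Q1 D ++ eval Q2 D.
Proof. apply map_app. Qed.

Lemma conflict_set_determines (D x : I) (Q1 Q2 : bundle I Out) :
  determines D Q2 Q1 ->
  conflict_set Q1 (eval Q1 D) x -> conflict_set Q2 (eval Q2 D) x.
Proof. intros Hdet Hx Heq. exact (Hx (Hdet x Heq)). Qed.

Lemma conflict_set_cat (D x : I) (Q1 Q2 : bundle I Out) :
  conflict_set (Q1 ++ Q2) (eval (Q1 ++ Q2) D) x ->
  conflict_set Q1 (eval Q1 D) x \/ conflict_set Q2 (eval Q2 D) x.
Proof.
  unfold conflict_set; rewrite !eval_cat; intros Hx.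
  destruct (classic (eval Q1 x = eval Q1 D)) as [H1 | H1]; [right | left]; auto.
  intros H2; apply Hx; rewrite H1, H2; reflexivity.
Qed.

End ConflictSets.

Theorem corollary1 (I Out : Type)
  (I_nonempty : inhabited I)
  (I_countable : exists g : nat -> I, forall D : I, exists n : nat, g n = D)
  (L : query I Out -> Prop)
  (f : (I -> Prop) -> R)
  (f_nonneg : nonneg_setfun f) (f_mono : monotone f) (f_sub : subadditive f) :
  let p := fun (Q : bundle I Out) (E : list Out) => f (conflict_set Q E) in
  answer_dependent_pricing L p /\ arbitrage_free L p.
Proof.
  intro p; split; [| split].
  - intros Q D _; apply f_nonneg.
  - intros D Q1 Q2 _ _ Hdet; apply Rle_ge, f_mono.
    intros x; apply conflict_set_determines, Hdet.
  - intros D Q1 Q2 _ _; eapply Rle_trans; [| apply f_sub].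
    apply f_mono; intros x; apply conflict_set_cat.
Qed.
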